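(* Let $F:\mathbb{R}^n\to\mathbb{R}^n$ be locally Lipschitz, $X^*=\{x:F(x)=0\}$, $x^*\in X^*$, $\mathcal{M}$ a smooth embedded submanifold of $\mathbb{R}^n$ containing $x^*$, and $\tilde X^*=X^*\cap\mathcal{M}$. Assume (A1), (A2), (A3) below, and let $b$ be as defined below. Let $q\in(1,2]$, $L_3>0$. For $x_k\in\mathcal{M}$ let $\mu_k=\|F(x_k)\|$, $J_k\in\partial_BF(x_k)$, $P_k=P(x_k)$, and let $d_k$ satisfy $(J_kP_k+\mu_kI)d_k=-F(x_k)+r_k$ where $\|r_k\|/\mu_k\le L_3\|F(x_k)\|^q$. Then there is a constant $c_1>0$ such that whenever $x_k\in\mathcal{M}\cap\bar B(x^*,b/2)$, $$\|d_k\|\le c_1\,\mathrm{dist}(x_k,\tilde X^* )+\mu_k^{-1}\|r_k\|.$$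
   Context: $\partial_BF(x)=\{\lim_kJ(x^k):x^k\to x, F \text{ differentiable at } x^k\}$ (B-Jacobian). $P(x)$ is the matrix of the orthogonal projection onto the tangent space $T_x\mathcal{M}$. (A1): there are $b_1>0$, $L_2>0$ such that $F$ is $L_2$-Lipschitz on $\bar B(x^*,b_1)$, and a constant $L_1>0$ such that for all $x,y\in\mathcal{M}\cap\bar B(x^*,b_1)$ and every $J(x)\in\partial_BF(x)$: $\|F(y)-F(x)-J(x)(y-x)\|\le L_1\|y-x\|^2$ and $\|F(y)-F(x)-J(x)P(x)(y-x)\|\le L_1\|y-x\|^2$. (A2): there is $b_2>0$ such that for all $x\in\mathcal{M}\cap\bar B(x^*,b_2)$ and all $J(x)\in\partial_BF(x)$, $\|(J(x)P(x)+\mu(x)I)^{-1}\|\le\mu(x)^{-1}$, $\mu(x)=\|F(x)\|$. (A3): there are $b_3>0$, $\gamma>0$ with $\|F(x)\|\ge\gamma\,\mathrm{dist}(x,\tilde X^* )$ for all $x\in\mathcal{M}\cap\bar B(x^*,b_3)$. Set $b=\min\{b_2,b_3,\gamma b_1/(2L_1+2L_2+2\gamma+2L_3L_2^q\gamma),1,\gamma/(L_1+L_2+\gamma+L_3L_2^q\gamma)\}$. *)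

From mathcomp Require Import all_boot all_order all_algebra.
From mathcomp Require Import all_classical all_reals all_analysis.
Set Implicit Arguments. Unset Strict Implicit. Unset Printing Implicit Defensive.
Import Order.TTheory GRing.Theory Num.Theory.
Import numFieldNormedType.Exports.
Local Open Scope classical_set_scope.
Local Open Scope ring_scope.

Section Defs.
Variable R : realType.

Definition enorm n (v : 'cV[R]_n) : R := Num.sqrt (\sum_(i < n) v i 0 ^+ 2).

Definition edot n (u v : 'cV[R]_n) : R := \sum_(i < n) u i 0 * v i 0.

Definition cball n (c : 'cV[R]_n) (r : R) : set 'cV[R]_n :=
  [set x | enorm (x - c) <= r].

Definition edist_set n (x : 'cV[R]_n) (S : set 'cV[R]_n) : R :=
  inf [set enorm (x - y) | y in S].

Definition elipschitz_on n m (F : 'cV[R]_n -> 'cV[R]_m) (L : R) (S : set 'cV[R]_n) :=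
  forall x y, S x -> S y -> enorm (F y - F x) <= L * enorm (y - x).

Definition elocally_lipschitz n m (F : 'cV[R]_n -> 'cV[R]_m) :=
  forall x, exists r : R, exists L : R, 0 < r /\ elipschitz_on F L (cball x r).

Definition jac n m (F : 'cV[R]_n -> 'cV[R]_m) (x : 'cV[R]_n) : 'M[R]_(m, n) :=
  \matrix_(i < m, j < n) (derive F x (delta_mx j 0 : 'cV[R]_n)) i 0.

Definition BJac n m (F : 'cV[R]_n -> 'cV[R]_m) (x : 'cV[R]_n) : set 'M[R]_(m, n) :=
  [set J | exists xs : nat -> 'cV[R]_n,
      (forall k, differentiable F (xs k)) /\
      xs @ \oo --> x /\ (fun k => jac F (xs k)) @ \oo --> J].

Fixpoint iter_dir n m (vs : seq 'cV[R]_n) (f : 'cV[R]_n -> 'cV[R]_m)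
    : 'cV[R]_n -> 'cV[R]_m :=
  match vs with
  | [::] => f
  | v :: vs' => fun x => derive (iter_dir vs' f) x v
  end.

Definition smooth_on n m (U : set 'cV[R]_n) (f : 'cV[R]_n -> 'cV[R]_m) :=
  forall vs : seq 'cV[R]_n, forall x, U x ->
    {for x, continuous (iter_dir vs f)} /\
    forall v, derivable (iter_dir vs f) x v.

Definition embedded_submanifold n (M : set 'cV[R]_n) :=
  exists k : nat, (k <= n)%N /\
  forall p, M p -> exists U : set 'cV[R]_n, open U /\ U p /\
    exists g : 'cV[R]_n -> 'cV[R]_(n - k),
      smooth_on U g /\
      (forall x, U x -> M x -> \rank (jac g x) = (n - k)%N) /\
      (forall x, U x -> (M x <-> g x = 0)).

Definition tangent_space n (M : set 'cV[R]_n) (x : 'cV[R]_n) : set 'cV[R]_n :=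
  [set v | exists gam : R -> 'cV[R]_n,
     gam 0 = x /\ (\forall t \near (0 : R), M (gam t)) /\ is_derive (0 : R) (1 : R) gam v].

Definition orth_proj_onto n (A : 'M[R]_n) (T : set 'cV[R]_n) :=
  forall v, T (A *m v) /\ forall w, T w -> edot (v - A *m v) w = 0.

Definition inv_opnorm_le n (A : 'M[R]_n) (c : R) :=
  A \in unitmx /\ forall v : 'cV[R]_n, enorm (invmx A *m v) <= c * enorm v.

Definition bconst (b1 b2 b3 gam L1 L2 L3 q : R) : R :=
  Num.min b2 (Num.min b3 (Num.min
    (gam * b1 / (2 * L1 + 2 * L2 + 2 * gam + 2 * L3 * powR L2 q * gam))
    (Num.min 1 (gam / (L1 + L2 + gam + L3 * powR L2 q * gam))))).

End Defs.

From mathcomp Require Import all_boot all_order all_algebra.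
From mathcomp Require Import all_classical all_reals all_analysis.
From mathcomp Require Import ring lra.
Set Implicit Arguments. Unset Strict Implicit. Unset Printing Implicit Defensive.
Import Order.TTheory GRing.Theory Num.Theory.
Import numFieldNormedType.Exports.
Local Open Scope classical_set_scope.
Local Open Scope ring_scope.

(* Write A = J P + mu I.  For every w the equation for d gives
   d = w - A^-1 (mu w) - A^-1 (F x + J P w) + A^-1 r, so ||A^-1|| <= 1/mu yields
   ||d|| <= 2 ||w|| + ||F x + J P w|| / mu + ||r|| / mu.  Taking w = y - x for a
   zero y of F on M, the tangent expansion in (A1) bounds the middle term by
   L1 ||x - y||^2 / mu.  Such zeros y come arbitrarily close to realising the
   distance D from x to the zeros of F on M (a nearest one need not exist), so
   the same bound holds with ||x - y|| replaced by D, and the error bound (A3),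
   gamma D <= mu, turns the quadratic term into (L1 / gamma) D.  Hence
   c1 = 2 + L1 / gamma works. *)

Section EuclideanNorm.
Variables (R : realType) (n : nat).
Implicit Types u v : 'cV[R]_n.

Lemma enorm_ge0 v : 0 <= enorm v.
Proof. exact: sqrtr_ge0. Qed.

Lemma enorm_sq v : enorm v ^+ 2 = \sum_(i < n) v i 0 ^+ 2.
Proof. by rewrite /enorm sqr_sqrtr // sumr_ge0 // => i _; exact: sqr_ge0. Qed.

Lemma enormZ (c : R) v : enorm (c *: v) = `|c| * enorm v.
Proof.
rewrite /enorm (_ : \sum_(i < n) _ = c ^+ 2 * \sum_(i < n) v i 0 ^+ 2).
  by rewrite sqrtrM ?sqr_ge0 // sqrtr_sqr.
by rewrite mulr_sumr; apply: eq_bigr => i _; rewrite mxE exprMn.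
Qed.

Lemma enormN v : enorm (- v) = enorm v.
Proof. by rewrite -scaleN1r enormZ normrN normr1 mul1r. Qed.

Lemma enormB u v : enorm (u - v) = enorm (v - u).
Proof. by rewrite -enormN opprB. Qed.

Lemma enorm_eq0 v : (enorm v == 0) = (v == 0).
Proof.
apply/eqP/eqP => [v0|->]; last by rewrite /enorm big1 ?sqrtr0 // => i _; rewrite mxE expr0n.
have /psumr_eq0P sq0 : \sum_(i < n) v i 0 ^+ 2 = 0 by rewrite -enorm_sq v0 expr0n.
apply/matrixP => i j; rewrite ord1 mxE.
by apply/eqP; rewrite -sqrf_eq0 sq0 // => k _; exact: sqr_ge0.
Qed.

Lemma enorm_gt0 v : (0 < enorm v) = (v != 0).
Proof. by rewrite lt_def enorm_eq0 enorm_ge0 andbT. Qed.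

Lemma edot_le u v : edot u v <= enorm u * enorm v.
Proof.
have [->|u0] := eqVneq u 0.
  by rewrite /edot big1 ?mulr_ge0 ?enorm_ge0 // => i _; rewrite mxE mul0r.
have [->|v0] := eqVneq v 0.
  by rewrite /edot big1 ?mulr_ge0 ?enorm_ge0 // => i _; rewrite mxE mulr0.
set a := enorm u; set b := enorm v.
have ab0 : 0 < a * b by rewrite mulr_gt0 ?enorm_gt0.
have : 0 <= \sum_(i < n) (u i 0 * b - v i 0 * a) ^+ 2.
  by rewrite sumr_ge0 // => i _; exact: sqr_ge0.
have -> : \sum_(i < n) (u i 0 * b - v i 0 * a) ^+ 2 =
    b ^+ 2 * \sum_(i < n) u i 0 ^+ 2 - 2 * a * b * edot u v
    + a ^+ 2 * \sum_(i < n) v i 0 ^+ 2.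
  rewrite /edot !mulr_sumr -!sumrB -big_split /=.
  by apply: eq_bigr => i _; ring.
rewrite -!enorm_sq -/a -/b; nra.
Qed.

Lemma enormD u v : enorm (u + v) <= enorm u + enorm v.
Proof.
rewrite -(@ler_pXn2r _ 2) ?nnegrE ?addr_ge0 ?enorm_ge0 //.
have -> : enorm (u + v) ^+ 2 = enorm u ^+ 2 + 2 * edot u v + enorm v ^+ 2.
  rewrite !enorm_sq /edot mulr_sumr -!big_split /=.
  by apply: eq_bigr => i _; rewrite mxE; ring.
have := edot_le u v; nra.
Qed.

Lemma enormDB u v : enorm (u - v) <= enorm u + enorm v.
Proof. by rewrite -(enormN v) enormD. Qed.

End EuclideanNorm.

Section DistanceToSet.
Variables (R : realType) (n : nat) (x : 'cV[R]_n) (S : set 'cV[R]_n).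

Lemma edist_set_le y : S y -> edist_set x S <= enorm (x - y).
Proof.
move=> Sy; apply: ge_inf; last by exists y.
by exists 0 => _ [z _ <-]; exact: enorm_ge0.
Qed.

Hypothesis S_neq0 : S !=set0.

Let dist_has_inf : has_inf [set enorm (x - y) | y in S].
Proof.
have [y Sy] := S_neq0.
by split; [exists (enorm (x - y)), y | exists 0 => _ [z _ <-]; exact: enorm_ge0].
Qed.

Lemma edist_set_ge0 : 0 <= edist_set x S.
Proof. by apply: lb_le_inf; [case: dist_has_inf | move=> _ [y _ <-]; exact: enorm_ge0]. Qed.

Lemma edist_set_approx eps : 0 < eps ->
  exists2 y, S y & enorm (x - y) < edist_set x S + eps.
Proof. by move=> eps0; have [_ [y Sy <-] ?] := inf_adherent eps0 dist_has_inf; exists y. Qed.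

End DistanceToSet.

Lemma le_quadratic_of_shifts (R : realFieldType) (a c k D delta : R) :
  0 <= c -> 0 <= k -> 0 <= D -> 0 < delta ->
  (forall eps, 0 < eps -> eps <= delta -> a <= c * (D + eps) + k * (D + eps) ^+ 2) ->
  a <= c * D + k * D ^+ 2.
Proof.
move=> c0 k0 D0 delta0 shift_bound; apply/ler_addgt0Pr => e e0.
set K := c + k * (2 * D + 1) + 1.
have K0 : 0 < K by rewrite /K; nra.
set eps := Num.min delta (Num.min 1 (e / K)).
have eps0 : 0 < eps by rewrite !lt_min delta0 ltr01 divr_gt0.
have epsd : eps <= delta by rewrite ge_min lexx.
have eps1 : eps <= 1 by rewrite !ge_min lexx orbT.
have epsK : eps * K <= e by rewrite -ler_pdivlMr // !ge_min lexx !orbT.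
apply: le_trans (shift_bound eps eps0 epsd) _.
(* The increment [eps * (c + k * (2 * D + eps))] is at most [eps * K]. *)
have : k * eps * eps <= k * eps by rewrite ler_piMr // mulr_ge0 // ltW.
rewrite /K in epsK; nra.
Qed.

Lemma regularized_step_bound (R : realType) (n : nat) (B : 'M[R]_n) (mu : R)
    (f r d w : 'cV[R]_n) :
  0 < mu -> inv_opnorm_le (B + mu%:M) mu^-1 -> (B + mu%:M) *m d = - f + r ->
  enorm d <= 2 * enorm w + mu^-1 * enorm (f + B *m w) + mu^-1 * enorm r.
Proof.
move=> mu0 [unitA invA] Ad.
have Aw : (B + mu%:M) *m w = B *m w + mu *: w by rewrite mulmxDl mul_scalar_mx.
move: (B + mu%:M) Aw unitA invA Ad => A Aw unitA invA Ad.
have dE : d = w - invmx A *m (mu *: w) - invmx A *m (f + B *m w) + invmx A *m r.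
  have -> : d = invmx A *m (A *m d) by rewrite (mulKmx unitA).
  have -> : A *m d = A *m w - mu *: w - (f + B *m w) + r.
    by rewrite Ad Aw addrK opprD addrCA subrr addr0.
  by rewrite mulmxDr !mulmxBr (mulKmx unitA).
have h_mu : enorm (invmx A *m (mu *: w)) <= enorm w.
  apply: le_trans (invA _) _.
  by rewrite enormZ ger0_norm ?(ltW mu0) // mulrA mulVf ?gt_eqF // mul1r.
rewrite dE; have := invA (f + B *m w); have := invA r.
have := enormD (w - invmx A *m (mu *: w) - invmx A *m (f + B *m w)) (invmx A *m r).
have := enormDB (w - invmx A *m (mu *: w)) (invmx A *m (f + B *m w)).
have := enormDB w (invmx A *m (mu *: w)).
lra.
Qed.

Lemma quadratic_le_linear_of_error_bound (R : realFieldType) (gam mu L D : R) :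
  0 < gam -> 0 < mu -> 0 <= L -> 0 <= D -> gam * D <= mu ->
  mu^-1 * L * D ^+ 2 <= L / gam * D.
Proof.
move=> gam0 mu0 L0 D0 gamD.
rewrite -(ler_pM2r (mulr_gt0 mu0 gam0)).
have -> : mu^-1 * L * D ^+ 2 * (mu * gam) = L * D * (gam * D).
  by field; rewrite gt_eqF.
have -> : L / gam * D * (mu * gam) = L * D * mu by field; rewrite gt_eqF.
by rewrite ler_wpM2l // mulr_ge0.
Qed.

Section LocalErrorBound.
Variables (R : realType) (n : nat) (F : 'cV[R]_n -> 'cV[R]_n) (M : set 'cV[R]_n).
Variables (P : 'cV[R]_n -> 'M[R]_n) (xstar : 'cV[R]_n) (b1 L1 : R).
Hypotheses (L1_ge0 : 0 <= L1) (b1_gt0 : 0 < b1).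
Hypotheses (F_xstar : F xstar = 0) (M_xstar : M xstar).
Hypothesis tangent_expansion : forall x y J,
  M x -> cball xstar b1 x -> M y -> cball xstar b1 y -> BJac F x J ->
  enorm (F y - F x - J *m P x *m (y - x)) <= L1 * enorm (y - x) ^+ 2.

Local Notation zeros := [set y | F y = 0 /\ M y].
Local Notation mu x := (enorm (F x)).

Lemma step_bound_at_zero x y J d r :
  M x -> cball xstar b1 x -> zeros y -> cball xstar b1 y -> BJac F x J ->
  F x != 0 -> inv_opnorm_le (J *m P x + (mu x)%:M) (mu x)^-1 ->
  (J *m P x + (mu x)%:M) *m d = - F x + r ->
  enorm d <= 2 * enorm (x - y) + (mu x)^-1 * L1 * enorm (x - y) ^+ 2
             + (mu x)^-1 * enorm r.
Proof.
move=> Mx xb [Fy0 My] yb BJ Fx0 invA Ad.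
have mu0 : 0 < mu x by rewrite enorm_gt0.
have imu0 : 0 <= (mu x)^-1 by rewrite invr_ge0 ltW.
apply: le_trans (regularized_step_bound (y - x) mu0 invA Ad) _.
have := tangent_expansion Mx xb My yb BJ.
rewrite Fy0 sub0r -opprD enormN (enormB y x) => /(ler_wpM2l imu0).
by rewrite !mulrA; lra.
Qed.

Lemma step_bound_edist_set x J d r :
  M x -> cball xstar (b1 / 4) x -> BJac F x J ->
  F x != 0 -> inv_opnorm_le (J *m P x + (mu x)%:M) (mu x)^-1 ->
  (J *m P x + (mu x)%:M) *m d = - F x + r ->
  enorm d <= 2 * edist_set x zeros + (mu x)^-1 * L1 * edist_set x zeros ^+ 2
             + (mu x)^-1 * enorm r.
Proof.
move=> Mx xb BJ Fx0 invA Ad.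
have imu0 : 0 <= (mu x)^-1 by rewrite invr_ge0 ltW ?enorm_gt0.
have zeros_xstar : zeros xstar by split.
have zeros_neq0 : zeros !=set0 by exists xstar.
have D0 := edist_set_ge0 x zeros_neq0.
have D_le := edist_set_le x zeros_xstar.
set D := edist_set x zeros in D0 D_le *.
have xb1 : cball xstar b1 x by rewrite /cball /= in xb *; lra.
suff : enorm d - (mu x)^-1 * enorm r <= 2 * D + (mu x)^-1 * L1 * D ^+ 2 by lra.
(* [eps <= b1 / 4] keeps the near-minimising zeros inside the ball of (A1). *)
apply: (@le_quadratic_of_shifts _ _ _ _ _ (b1 / 4)) => //.
- exact: mulr_ge0.
- by rewrite divr_gt0.
move=> eps eps0 eps_le.
have [y zy yx] := edist_set_approx x zeros_neq0 eps0.
have yb : cball xstar b1 y.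
  rewrite /cball /= in xb *.
  have := enormD (y - x) (x - xstar); rewrite addrA subrK (enormB y x).
  lra.
have := step_bound_at_zero Mx xb1 zy yb BJ Fx0 invA Ad.
set T := enorm (x - y) in yx *.
have T0 : 0 <= T by exact: enorm_ge0.
have T2 : T ^+ 2 <= (D + eps) ^+ 2 by nra.
have := ler_wpM2l (mulr_ge0 imu0 L1_ge0) T2.
lra.
Qed.

End LocalErrorBound.

Section RadiusBounds.
Variables (R : realType) (b1 b2 b3 gam L1 L2 L3 q : R).

Lemma bconst_le_b2 : bconst b1 b2 b3 gam L1 L2 L3 q <= b2.
Proof. by rewrite /bconst ge_min lexx. Qed.

Lemma bconst_le_b3 : bconst b1 b2 b3 gam L1 L2 L3 q <= b3.
Proof. by rewrite /bconst !ge_min lexx orbT. Qed.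

Lemma bconst_le_half_b1 : 0 < b1 -> 0 < gam -> 0 <= L1 -> 0 <= L2 -> 0 <= L3 ->
  bconst b1 b2 b3 gam L1 L2 L3 q <= b1 / 2.
Proof.
move=> b1_gt0 gam_gt0 L1_ge0 L2_ge0 L3_ge0.
rewrite /bconst !ge_min; apply/orP; right; apply/orP; right; apply/orP; left.
have := @powR_ge0 _ L2 q; set p := powR L2 q => p_ge0.
have pg0 : 0 <= L3 * p * gam by rewrite !mulr_ge0 // ltW.
by rewrite ler_pdivrMr; nra.
Qed.

End RadiusBounds.

Theorem lemma5p2 (R : realType) (n : nat) (F : 'cV[R]_n -> 'cV[R]_n)
  (M : set 'cV[R]_n) (P : 'cV[R]_n -> 'M[R]_n) (xstar : 'cV[R]_n)
  (b1 b2 b3 L1 L2 L3 gam q : R) :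
  elocally_lipschitz F ->
  F xstar = 0 ->
  embedded_submanifold M -> M xstar ->
  (forall x, M x -> orth_proj_onto (P x) (tangent_space M x)) ->
  (* (A1) *)
  0 < b1 -> 0 < L2 -> 0 < L1 ->
  elipschitz_on F L2 (cball xstar b1) ->
  (forall x y J, M x -> cball xstar b1 x -> M y -> cball xstar b1 y ->
     BJac F x J ->
     enorm (F y - F x - J *m (y - x)) <= L1 * enorm (y - x) ^+ 2 /\
     enorm (F y - F x - J *m P x *m (y - x)) <= L1 * enorm (y - x) ^+ 2) ->
  (* (A2), required where mu(x) = ||F x|| > 0 *)
  0 < b2 ->
  (forall x J, M x -> cball xstar b2 x -> BJac F x J -> F x != 0 ->
     inv_opnorm_le (J *m P x + (enorm (F x))%:M) (enorm (F x))^-1) ->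
  (* (A3) *)
  0 < b3 -> 0 < gam ->
  (forall x, M x -> cball xstar b3 x ->
     gam * edist_set x [set y | F y = 0 /\ M y] <= enorm (F x)) ->
  1 < q -> q <= 2 -> 0 < L3 ->
  exists c1 : R, 0 < c1 /\
    forall (x : 'cV[R]_n) (J : 'M[R]_n) (d r : 'cV[R]_n),
      M x -> cball xstar (bconst b1 b2 b3 gam L1 L2 L3 q / 2) x ->
      BJac F x J -> F x != 0 ->
      (J *m P x + (enorm (F x))%:M) *m d = - F x + r ->
      enorm r / enorm (F x) <= L3 * powR (enorm (F x)) q ->
      enorm d <= c1 * edist_set x [set y | F y = 0 /\ M y] + (enorm (F x))^-1 * enorm r.
Proof.
move=> _ F_xstar _ M_xstar _ b1_gt0 L2_gt0 L1_gt0 _ A1 _ A2 _ gam_gt0 A3 _ _ L3_gt0.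
exists (2 + L1 / gam); split=> [|x J d r Mx xb BJ Fx0 Ad _]; first by rewrite addr_gt0 ?divr_gt0.
have b_le1 := bconst_le_half_b1 b2 b3 q b1_gt0 gam_gt0
  (ltW L1_gt0) (ltW L2_gt0) (ltW L3_gt0).
have b_le2 := bconst_le_b2 b1 b2 b3 gam L1 L2 L3 q.
have b_le3 := bconst_le_b3 b1 b2 b3 gam L1 L2 L3 q.
rewrite /cball /= in xb; have xdist_ge0 := enorm_ge0 (x - xstar).
have xb1 : cball xstar (b1 / 4) x by rewrite /cball /=; lra.
have xb2 : cball xstar b2 x by rewrite /cball /=; lra.
have xb3 : cball xstar b3 x by rewrite /cball /=; lra.
have tangent_expansion x' y J' Mx' xb' My yb BJ' := (A1 x' y J' Mx' xb' My yb BJ').2.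
have := step_bound_edist_set (ltW L1_gt0) b1_gt0 F_xstar M_xstar tangent_expansion
  Mx xb1 BJ Fx0 (A2 x J Mx xb2 BJ Fx0) Ad.
have mu_gt0 : 0 < enorm (F x) by rewrite enorm_gt0.
have zeros_neq0 : [set y | F y = 0 /\ M y] !=set0 by exists xstar.
have := quadratic_le_linear_of_error_bound gam_gt0 mu_gt0 (ltW L1_gt0)
  (edist_set_ge0 x zeros_neq0) (A3 x Mx xb3).
lra.
Qed.
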